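(* Let $A,B,C,D,E,F$ be real numbers such that the $8\times 8$ matrix $$\gamma=\begin{pmatrix}\mathcal A&\mathcal C\\ \mathcal C&\mathcal B\end{pmatrix},\quad \mathcal A=\mathrm{diag}(A,B,A,B),\ \mathcal B=\mathrm{diag}(C,D,C,D),\ \mathcal C=\begin{pmatrix}E&0&0&0\\0&0&0&-F\\0&0&-E&0\\0&-F&0&0\end{pmatrix}$$ is the covariance matrix of a four-mode Gaussian state (the generalized Werner–Wolf state), where modes 1,2 form party $A$ and modes 3,4 form party $B$. This state is separable with respect to the bipartition (modes 1,2)$|$(modes 3,4) if and only if $$(AC-E^2)(BD-F^2)-2|EF|-CD-AB+1\geq 0.$$
   Context: Quadratures are ordered as $(\hat x_1,\hat p_1,\hat x_2,\hat p_2,\hat x_3,\hat p_3,\hat x_4,\hat p_4)$ with $[\hat R_j,\hat R_l]=i\sigma_{jl}$, $\sigma=\begin{pmatrix}0&1\\-1&0\end{pmatrix}^{\oplus 4}$. The covariance matrix is $\gamma_{ij}=\langle \hat R_i\hat R_j+\hat R_j\hat R_i\rangle-2\langle\hat R_i\rangle\langle\hat R_j\rangle$ (vacuum has covariance matrix $I$), and $\gamma$ is a valid covariance matrix iff $\gamma+i\sigma\ge 0$. *)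

From HB Require Import structures.
From mathcomp Require Import all_boot all_order all_algebra all_reals.
From mathcomp Require Export complex.
Set Implicit Arguments. Unset Strict Implicit. Unset Printing Implicit Defensive.
Import Order.TTheory GRing.Theory Num.Theory.
Local Open Scope ring_scope.

(* Symplectic form sigma = (0 1; -1 0)^{(+) n} for quadratures ordered
   (x_1, p_1, ..., x_n, p_n): index 2k is x_{k+1}, index 2k+1 is p_{k+1}. *)
Definition symp_form (R : pzRingType) (n : nat) : 'M[R]_(n.*2) :=
  \matrix_(i, j)
    (if ~~ odd i && (nat_of_ord j == (nat_of_ord i).+1) then 1
     else if odd i && (nat_of_ord i == (nat_of_ord j).+1) then -1 else 0).

Definition cpsd (R : rcfType) (n : nat) (M : 'M[R[i]]_n) : Prop :=
  (map_mx (@conjc R) M)^T = M /\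
  forall v : 'cV[R[i]]_n, 0 <= ((map_mx (@conjc R) v)^T *m M *m v) 0 0.

Definition rpsd (R : realDomainType) (n : nat) (M : 'M[R]_n) : Prop :=
  M^T = M /\ forall v : 'cV[R]_n, 0 <= (v^T *m M *m v) 0 0.

Definition is_cov (R : rcfType) (n : nat) (g : 'M[R]_(n.*2)) : Prop :=
  cpsd (map_mx (real_complex R) g
        + (Complex 0 1) *: map_mx (real_complex R) (symp_form R n)).

(* Separability of an (m+n)-mode Gaussian state with covariance matrix g with
   respect to the bipartition (first m modes) | (last n modes), via the
   Werner-Wolf criterion: there exist valid covariance matrices gA, gB of the
   two parties with g >= gA (+) gB. *)
Definition gaussian_separable (R : rcfType) (m n : nat)
    (g : 'M[R]_(m.*2 + n.*2)) : Prop :=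
  exists (gA : 'M[R]_(m.*2)) (gB : 'M[R]_(n.*2)),
    is_cov gA /\ is_cov gB /\ rpsd (g - block_mx gA 0 0 gB).

Definition diag4 (R : pzRingType) (a b : R) : 'M[R]_4 :=
  diag_mx (\row_(j < 4) nth 0 [:: a; b; a; b] j).

Definition wwC (R : pzRingType) (E F : R) : 'M[R]_4 :=
  \matrix_(i < 4, j < 4)
    nth 0 (nth [::] [:: [:: E; 0; 0; 0];
                        [:: 0; 0; 0; - F];
                        [:: 0; 0; - E; 0];
                        [:: 0; - F; 0; 0]] i) j.

Definition ww_gamma (R : pzRingType) (A B C D E F : R) : 'M[R]_(2.*2 + 2.*2) :=
  block_mx (diag4 A B) (wwC E F) (wwC E F) (diag4 C D).

From mathcomp Require Import all_boot all_order all_algebra all_reals.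
From mathcomp Require Import ring lra.
Set Implicit Arguments. Unset Strict Implicit. Unset Printing Implicit Defensive.
Import Order.TTheory GRing.Theory Num.Theory.
Local Open Scope ring_scope.

(* Everything reduces to positive semidefinite 2x2 blocks [p q; q r].
   Only if: restricting gamma - gA (+) gB to the quadrature pairs (x1,x3),
   (x2,x4), (p1,p4), (p2,p3), and gA + i sigma, gB + i sigma to single modes,
   then averaging over the two modes of each party, gives a, b, c, d with
   ab >= 1, cd >= 1, [A-a E; E C-c] >= 0 and [B-b F; F D-d] >= 0, from which
   the margin ww_margin is a sum of nonnegative terms.
   If: gamma + i sigma >= 0 forces p := BD - F^2 > 0, D/p <= A and B/p <= C
   (Schur complements), and the margin equals
   p ((A - D/p)(C - B/p) - (|E| + |F|/p)^2).  Splitting the off-diagonal entry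
   |E| + |F|/p of this PSD block between two PSD blocks yields pure states
   gA = diag(a, 1/a, a, 1/a), gB = diag(c, 1/c, c, 1/c) with
   gamma >= gA (+) gB. *)

Section TwoByTwo.
Variable R : realFieldType.
Implicit Types (p q r x y : R).

Definition psd2 p q r : Prop := [/\ 0 <= p, 0 <= r & q ^+ 2 <= p * r].

Lemma psd2P p q r :
  (forall x y, 0 <= p * x ^+ 2 + 2 * q * x * y + r * y ^+ 2) <-> psd2 p q r.
Proof.
split=> [form_ge0 | [p_ge0 r_ge0 q2_le]].
  have p_ge0 : 0 <= p by have := form_ge0 1 0; lra.
  have r_ge0 : 0 <= r by have := form_ge0 0 1; lra.
  split=> //; have [p0 | p_neq0] := eqVneq p 0.
    have [-> | q_neq0] := eqVneq q 0; first by rewrite p0 mul0r expr0n.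
    have := form_ge0 (- (r + 1) / (2 * q)) 1; rewrite p0.
    have -> : 0 * (- (r + 1) / (2 * q)) ^+ 2 + 2 * q * (- (r + 1) / (2 * q)) * 1
              + r * 1 ^+ 2 = -1 by field.
    by rewrite ler0N1.
  have := form_ge0 (- q) p.
  have -> : p * (- q) ^+ 2 + 2 * q * - q * p + r * p ^+ 2 = p * (p * r - q ^+ 2).
    by ring.
  by rewrite pmulr_rge0 ?lt0r ?p_neq0 // subr_ge0.
move=> x y; have [p0 | p_neq0] := eqVneq p 0.
  have q0 : q = 0.
    by apply/eqP; rewrite -sqrf_eq0 eq_le sqr_ge0 andbT -(mul0r r) -p0.
  by rewrite p0 q0 !mul0r mulr0 !add0r; nra.
have p_gt0 : 0 < p by rewrite lt0r p_neq0.
rewrite -(pmulr_rge0 _ p_gt0).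
have -> : p * (p * x ^+ 2 + 2 * q * x * y + r * y ^+ 2) =
          (p * x + q * y) ^+ 2 + (p * r - q ^+ 2) * y ^+ 2 by ring.
by rewrite addr_ge0 ?sqr_ge0 // mulr_ge0 ?sqr_ge0 // subr_ge0.
Qed.

Lemma psd2_normr p q r : psd2 p `|q| r <-> psd2 p q r.
Proof. by rewrite /psd2 real_normK ?num_real. Qed.

Lemma psd2_norm_le p q r : psd2 p q r -> 2 * `|q| <= p + r.
Proof.
move=> /psd2P form_ge0; have := form_ge0 1 1; have := form_ge0 1 (-1).
by case: (ler0P q) => _; lra.
Qed.

Lemma psd2_mean p q r p' r' :
  psd2 p q r -> psd2 p' q r' -> psd2 ((p + p') / 2) q ((r + r') / 2).
Proof.
move=> /psd2P form_ge0 /psd2P form'_ge0; apply/psd2P => x y.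
by have := form_ge0 x y; have := form'_ge0 x y; lra.
Qed.

Lemma psd2Z k p q r : 0 <= k -> psd2 p q r -> psd2 (k * p) (k * q) (k * r).
Proof.
move=> k_ge0 [p_ge0 r_ge0 q2_le]; split; rewrite ?mulr_ge0 //.
have -> : k * p * (k * r) = k ^+ 2 * (p * r) by ring.
by rewrite exprMn ler_wpM2l ?sqr_ge0.
Qed.

Lemma psd2_split p r e g : 0 <= e -> 0 <= g -> psd2 p (e + g) r ->
  exists p1 r1, psd2 p1 g r1 /\ psd2 (p - p1) e (r - r1).
Proof.
move=> e_ge0 g_ge0 psd_pr; have [eg0 | eg_neq0] := eqVneq (e + g) 0.
  have [-> ->] : e = 0 /\ g = 0 by split; lra.
  case: psd_pr => p_ge0 r_ge0 _; exists 0, 0; rewrite !subr0.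
  by split; split; rewrite ?expr0n ?mulr_ge0.
pose k := g / (e + g); exists (k * p), (k * r).
have k_ge0 : 0 <= k by rewrite divr_ge0 ?addr_ge0.
have k_le1 : 0 <= 1 - k.
  by rewrite subr_ge0 ler_pdivrMr ?lt0r ?eg_neq0 ?addr_ge0 //; lra.
split; first by have := psd2Z k_ge0 psd_pr; rewrite /k mulrC divfK.
have := psd2Z k_le1 psd_pr.
have -> : (1 - k) * (e + g) = e by rewrite /k; field.
by rewrite !mulrBl !mul1r.
Qed.

Lemma form3_schur (a b d f : R) : 0 < d ->
  (forall t k l,
     0 <= a * t ^+ 2 + b * k ^+ 2 + d * l ^+ 2 - 2 * f * k * l - 2 * t * k) ->
  0 < b * d - f ^+ 2 /\ d / (b * d - f ^+ 2) <= a.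
Proof.
move=> d_gt0 form_ge0; set p := b * d - f ^+ 2.
have [_ _] : psd2 b (- f) d.
  by apply/psd2P => k l; have := form_ge0 0 k l; lra.
rewrite sqrrN -subr_ge0 -/p => p_ge0.
have p_gt0 : 0 < p.
  rewrite lt0r p_ge0 andbT; apply/eqP => p0.
  pose s := (a + 1) / (2 * d); have := form_ge0 1 (d * s) (f * s).
  have -> : a * 1 ^+ 2 + b * (d * s) ^+ 2 + d * (f * s) ^+ 2 - 2 * f * (d * s) * (f * s)
            - 2 * 1 * (d * s) = a - 2 * d * s + d * s ^+ 2 * p by rewrite /p; ring.
  rewrite p0 mulr0 addr0 /s; have -> : 2 * d * ((a + 1) / (2 * d)) = a + 1.
    by field; rewrite gt_eqF.
  lra.
split=> //; rewrite -subr_ge0; have := form_ge0 1 (d / p) (f / p).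
have -> : a * 1 ^+ 2 + b * (d / p) ^+ 2 + d * (f / p) ^+ 2 - 2 * f * (d / p) * (f / p)
          - 2 * 1 * (d / p) = a - d / p by rewrite /p; field; rewrite gt_eqF.
done.
Qed.

End TwoByTwo.

Section Margin.
Variable R : realFieldType.

Definition ww_margin (A B C D E F : R) : R :=
  (A * C - E ^+ 2) * (B * D - F ^+ 2) - 2 * `|E * F| - C * D - A * B + 1.

Lemma ww_margin_ge0 (A B C D E F a b c d : R) :
  psd2 a (-1) b -> psd2 c (-1) d -> psd2 (A - a) E (C - c) -> psd2 (B - b) F (D - d) ->
  0 <= ww_margin A B C D E F.
Proof.
move=> psd_ab psd_cd psd_AC psd_BD.
rewrite -[A](subrKC a) -[B](subrKC b) -[C](subrKC c) -[D](subrKC d).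
move: (A - a) (B - b) (C - c) (D - d) psd_AC psd_BD => u s v t.
move: psd_ab psd_cd; rewrite /psd2 !sqrrN !expr1n.
move=> [a_ge0 b_ge0 ab_ge1] [c_ge0 d_ge0 cd_ge1].
move=> [u_ge0 v_ge0 E2_le] [s_ge0 t_ge0 F2_le].
have AC_ge : a * c + a * v + u * c <= (a + u) * (c + v) - E ^+ 2 by lra.
have BD_ge : b * d + b * t + s * d <= (b + s) * (d + t) - F ^+ 2 by lra.
have EF_le : 2 * `|E * F| <= a * v * s * d + u * c * b * t.
  apply: psd2_norm_le; split; rewrite ?mulr_ge0 //.
  have -> : a * v * s * d * (u * c * b * t) = (u * v) * (s * t) * ((a * b) * (c * d)).
    by ring.
  rewrite exprMn; apply: le_trans (ler_pM _ _ E2_le F2_le) _; rewrite ?sqr_ge0 //.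
  by rewrite ler_peMr ?mulr_ge0 // mulr_ege1.
have rest_ge0 : 0 <= (a * c + a * v + u * c) * (b * d + b * t + s * d)
    - (a * v * s * d + u * c * b * t) - (c + v) * (d + t) - (a + u) * (b + s) + 1.
  have -> : (a * c + a * v + u * c) * (b * d + b * t + s * d)
      - (a * v * s * d + u * c * b * t) - (c + v) * (d + t) - (a + u) * (b + s) + 1
    = (a * b - 1) * (c * d - 1 + c * t + v * d + v * t)
      + (c * d - 1) * (a * s + u * b + u * s) by ring.
  have ab1 : 0 <= a * b - 1 by rewrite subr_ge0.
  have cd1 : 0 <= c * d - 1 by rewrite subr_ge0.
  by apply: addr_ge0; apply: mulr_ge0 => //; do ?apply: addr_ge0 => //; apply: mulr_ge0.
have X_ge0 : 0 <= a * c + a * v + u * c by do !apply: addr_ge0; apply: mulr_ge0.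
have Y_ge0 : 0 <= b * d + b * t + s * d by do !apply: addr_ge0; apply: mulr_ge0.
have := ler_pM X_ge0 Y_ge0 AC_ge BD_ge; rewrite /ww_margin; lra.
Qed.

Lemma ww_margin_schur (A B C D E F : R) (p := B * D - F ^+ 2) : 0 < p ->
  ww_margin A B C D E F = p * ((A - D / p) * (C - B / p) - (`|E| + `|F| / p) ^+ 2).
Proof.
move=> p_gt0; rewrite /ww_margin /p normrM.
rewrite -[E ^+ 2](real_normK (num_real E)) -[F ^+ 2](real_normK (num_real F)).
by field; rewrite real_normK ?num_real // -/p; apply: lt0r_neq0.
Qed.

Lemma psd2_sub_inv (B D F d1 d2 : R) (p := B * D - F ^+ 2) :
  0 < B -> 0 < D -> 0 < p -> psd2 d1 (F / p) d2 ->
  psd2 (B - (D / p + d1)^-1) F (D - (B / p + d2)^-1).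
Proof.
move=> B_gt0 D_gt0 p_gt0 [d1_ge0 d2_ge0 F2_le].
have a_gt0 : 0 < D / p + d1 by rewrite ltr_wpDr ?divr_gt0.
have c_gt0 : 0 < B / p + d2 by rewrite ltr_wpDr ?divr_gt0.
have p_le : p <= B * D by rewrite /p lerBlDr lerDl sqr_ge0.
split.
- rewrite subr_ge0 -[B]invrK lef_pV2 ?posrE ?invr_gt0 //.
  suff : B^-1 <= D / p by lra.
  by rewrite ler_pdivlMr // ler_pdivrMl.
- rewrite subr_ge0 -[D]invrK lef_pV2 ?posrE ?invr_gt0 //.
  suff : D^-1 <= B / p by lra.
  by rewrite ler_pdivlMr // ler_pdivrMl // mulrC.
rewrite -subr_ge0.
have -> : (B - (D / p + d1)^-1) * (D - (B / p + d2)^-1) - F ^+ 2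
          = p / ((D / p + d1) * (B / p + d2)) * (d1 * d2 - (F / p) ^+ 2).
  rewrite /p; field; rewrite -/p.
  have := mulr_ge0 d1_ge0 (ltW p_gt0); have := mulr_ge0 d2_ge0 (ltW p_gt0).
  by move=> ? ?; apply/and3P; split; apply: lt0r_neq0; lra.
by rewrite mulr_ge0 ?subr_ge0 // divr_ge0 ?mulr_ge0 ?ltW.
Qed.

Lemma ww_margin_split (A B C D E F : R) (p := B * D - F ^+ 2) :
  0 < B -> 0 < D -> 0 < p -> D / p <= A -> B / p <= C ->
  0 <= ww_margin A B C D E F ->
  exists a c, [/\ 0 < a, 0 < c, psd2 (A - a) E (C - c)
                & psd2 (B - a^-1) F (D - c^-1)].
Proof.
move=> B_gt0 D_gt0 p_gt0 A_ge C_ge; rewrite ww_margin_schur // pmulr_rge0 // subr_ge0.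
move=> EF_le; have psd_AC : psd2 (A - D / p) (`|E| + `|F| / p) (C - B / p).
  by split; rewrite ?subr_ge0.
have [d1 [d2 [psd_d psd_rest]]] :=
  psd2_split (normr_ge0 E) (divr_ge0 (normr_ge0 F) (ltW p_gt0)) psd_AC.
have [d1_ge0 d2_ge0 _] := psd_d.
exists (D / p + d1), (B / p + d2); split.
- by rewrite ltr_wpDr ?divr_gt0.
- by rewrite ltr_wpDr ?divr_gt0.
- by move/psd2_normr: psd_rest; rewrite !opprD !addrA.
apply: psd2_sub_inv => //.
by apply/psd2_normr; rewrite normf_div (gtr0_norm p_gt0).
Qed.

End Margin.

Section BilinearForm.
Variables (R : comPzRingType) (n : nat).
Implicit Types (M : 'M[R]_n) (u v w : 'cV[R]_n).

Definition bform M u v : R := (u^T *m M *m v) 0 0.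

Lemma bformE M u v : bform M u v = \sum_i \sum_j u i 0 * M i j * v j 0.
Proof.
rewrite /bform mxE exchange_big; apply: eq_bigr => i _.
by rewrite mxE big_distrl; apply: eq_bigr => j _; rewrite !mxE.
Qed.

Lemma bformDl M u v w : bform M (u + v) w = bform M u w + bform M v w.
Proof. by rewrite /bform linearD !mulmxDl mxE. Qed.

Lemma bformDr M u v w : bform M u (v + w) = bform M u v + bform M u w.
Proof. by rewrite /bform mulmxDr mxE. Qed.

Lemma bform_delta M i j (a b : R) :
  bform M (a *: delta_mx i 0) (b *: delta_mx j 0) = a * b * M i j.
Proof.
rewrite /bform !linearZ /= -!scalemxAl trmx_delta -rowE -colE !mxE.
by rewrite mulrCA mulrA.
Qed.

Lemma bform_tr M u v : bform M^T u v = bform M v u.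
Proof.
rewrite /bform.
have -> : u^T *m M^T *m v = (v^T *m M *m u)^T by rewrite !trmx_mul trmxK mulmxA.
by rewrite mxE.
Qed.

End BilinearForm.

Lemma rpsd_minor (R : realFieldType) n (M : 'M[R]_n) i j :
  rpsd M -> psd2 (M i i) (M i j) (M j j).
Proof.
move=> [MT M_psd]; apply/psd2P => x y.
have := M_psd (x *: delta_mx i 0 + y *: delta_mx j 0).
rewrite -[_ 0 0]/(bform _ _ _) !(bformDl, bformDr) !bform_delta.
have /matrixP/(_ i j) := MT; rewrite mxE => ->; lra.
Qed.

Section HermitianForm.
Variables (R : rcfType) (n : nat).
Implicit Types (g s : 'M[R]_n) (x y : 'cV[R]_n).

Local Notation "M ^C" := (map_mx (real_complex R) M) (at level 1, format "M ^C").
Local Notation iC := (Complex 0 1 : R[i]).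

(* Real part of (x - i y)^T (g + i s) (x + i y). *)
Definition re_form g s x y : R :=
  bform g x x + bform g y y + bform s y x - bform s x y.

Lemma herm_formE g s x y (v := x^C + iC *: y^C) :
  bform (g^C + iC *: s^C) (map_mx conjc v) v =
  Complex (re_form g s x y) (bform g x y - bform g y x + bform s x x + bform s y y).
Proof.
apply/eqP; rewrite eq_complex /re_form !bformE; apply/andP; split; apply/eqP.
  rewrite raddf_sum -!big_split -sumrB /=; apply: eq_bigr => i _.
  rewrite raddf_sum -!big_split -sumrB /=; apply: eq_bigr => j _.
  by rewrite !mxE /=; ring.
rewrite raddf_sum -sumrB -!big_split /=; apply: eq_bigr => i _.
rewrite raddf_sum -sumrB -!big_split /=; apply: eq_bigr => j _.
by rewrite !mxE /=; ring.
Qed.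

Lemma cpsd_re_form g s x y : cpsd (g^C + iC *: s^C) -> 0 <= re_form g s x y.
Proof.
move=> [_ /(_ (x^C + iC *: y^C))].
by have := herm_formE g s x y; rewrite {1}/bform => ->; rewrite lecE => /andP[].
Qed.

Lemma re_form_cpsd g s : g^T = g -> s^T = - s ->
  (forall x y, 0 <= re_form g s x y) -> cpsd (g^C + iC *: s^C).
Proof.
move=> gT sT form_ge0; split.
  apply/matrixP => i j; have /matrixP/(_ i j) := gT; have /matrixP/(_ i j) := sT.
  rewrite !mxE => -> ->; apply/eqP; rewrite eq_complex /=.
  by apply/andP; split; apply/eqP; ring.
move=> v.
have -> : v = (map_mx (@complex.Re R) v)^C + iC *: (map_mx (@complex.Im R) v)^C.
  apply/matrixP => i j; rewrite !mxE; case: (v i j) => a b /=.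
  by apply/eqP; rewrite eq_complex /=; apply/andP; split; apply/eqP; ring.
have := herm_formE g s (map_mx (@complex.Re R) v) (map_mx (@complex.Im R) v).
rewrite {1}/bform => ->; rewrite lecE /= form_ge0 andbT.
rewrite -[in bform g _ _]gT bform_tr subrr add0r.
have skew u : bform s u u = 0.
  by have := bform_tr s u u; rewrite sT /bform mulmxN mulNmx mxE; lra.
by rewrite !skew addr0.
Qed.

End HermitianForm.

Lemma tr_symp_form (R : pzRingType) n : (symp_form R n)^T = - symp_form R n.
Proof.
apply/matrixP => i j; rewrite !mxE.
have [-> | _] := eqVneq (i : nat) j.+1.
  rewrite (ltn_eqF (leqW (ltnSn j))) /=.
  by case: (odd j); rewrite /= ?opprK ?oppr0.
have [-> | _] := eqVneq (j : nat) i.+1.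
  by rewrite /=; case: (odd i); rewrite /= ?opprK ?oppr0.
by rewrite !andbF oppr0.
Qed.

Section Covariance.
Variables (R : rcfType) (n : nat).
Implicit Types (g : 'M[R]_(n.*2)) (x y : 'cV[R]_(n.*2)).
Local Notation sigma := (symp_form R n).

Lemma is_cov_re_form g x y : is_cov g -> 0 <= re_form g sigma x y.
Proof. exact: cpsd_re_form. Qed.

Lemma re_form_is_cov g :
  g^T = g -> (forall x y, 0 <= re_form g sigma x y) -> is_cov g.
Proof. by move=> gT; apply: re_form_cpsd gT (tr_symp_form R n). Qed.

Lemma is_cov_minor g (i j : 'I_(n.*2)) :
  is_cov g -> ~~ odd i -> j = i.+1 :> nat -> psd2 (g i i) (-1) (g j j).
Proof.
move=> cov_g i_even j_succ; apply/psd2P => t u.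
have := is_cov_re_form (t *: delta_mx i 0) (u *: delta_mx j 0) cov_g.
rewrite /re_form !bform_delta !mxE j_succ /= i_even eqxx (ltn_eqF (leqW (ltnSn i))) /=.
lra.
Qed.

End Covariance.

Lemma is_cov_diag4 (R : rcfType) (a b : R) :
  psd2 a (-1) b -> is_cov (n := 2) (diag4 a b).
Proof.
move=> /psd2P form_ge0; apply: re_form_is_cov; first by rewrite /diag4 tr_diag_mx.
move=> x y; rewrite /re_form !bformE !big_ord_recl !big_ord0 !mxE /= !mulr1n !mulr0n.
move: (x ord0 0) (x (lift ord0 ord0) 0) (x (lift ord0 (lift ord0 ord0)) 0)
  (x (lift ord0 (lift ord0 (lift ord0 ord0))) 0) => x0 x1 x2 x3.
move: (y ord0 0) (y (lift ord0 ord0) 0) (y (lift ord0 (lift ord0 ord0)) 0)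
  (y (lift ord0 (lift ord0 (lift ord0 ord0))) 0) => y0 y1 y2 y3.
have := form_ge0 x0 y1; have := form_ge0 y0 (- x1).
have := form_ge0 x2 y3; have := form_ge0 y2 (- x3).
lra.
Qed.

Lemma tr_wwC (R : pzRingType) (E F : R) : (wwC E F)^T = wwC E F.
Proof.
apply/matrixP => i j; rewrite !mxE.
by case: i => [[|[|[|[|i]]]] ?] //; case: j => [[|[|[|[|j]]]] ?].
Qed.

Section WernerWolf.
Variables (R : rcfType) (A B C D E F : R).
Local Notation gamma := (ww_gamma A B C D E F).
Local Notation q k := (@Ordinal (2.*2) k isT).
Local Notation inA k := (lshift (2.*2) (q k)).
Local Notation inB k := (rshift (2.*2) (q k)).

Lemma ww_gap_minors (gA gB : 'M[R]_(2.*2)) :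
  rpsd (gamma - block_mx gA 0 0 gB) ->
  [/\ psd2 (A - gA (q 0) (q 0)) E (C - gB (q 0) (q 0)),
      psd2 (A - gA (q 2) (q 2)) (- E) (C - gB (q 2) (q 2)),
      psd2 (B - gA (q 1) (q 1)) (- F) (D - gB (q 3) (q 3)) &
      psd2 (B - gA (q 3) (q 3)) (- F) (D - gB (q 1) (q 1))].
Proof.
rewrite /ww_gamma opp_block_mx add_block_mx => gap.
have := rpsd_minor (inA 0) (inB 0) gap; have := rpsd_minor (inA 2) (inB 2) gap.
have := rpsd_minor (inA 1) (inB 3) gap; have := rpsd_minor (inA 3) (inB 1) gap.
rewrite !(block_mxEul, block_mxEur, block_mxEdl, block_mxEdr) !mxE /= !subr0.
by move=> ? ? ? ?; split.
Qed.

Lemma ww_gap_rpsd (a b c d : R) : psd2 (A - a) E (C - c) -> psd2 (B - b) F (D - d) ->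
  rpsd (gamma - block_mx (diag4 a b) 0 0 (diag4 c d)).
Proof.
move=> /psd2P form_AC /psd2P form_BD.
rewrite /ww_gamma opp_block_mx add_block_mx !oppr0 !addr0; split.
  by rewrite tr_block_mx tr_wwC !linearB /= /diag4 !tr_diag_mx.
move=> v; rewrite -[_ 0 0]/(bform _ v v) bformE.
under eq_bigr do rewrite big_split_ord.
rewrite big_split_ord !big_ord_recl !big_ord0.
rewrite !(block_mxEul, block_mxEur, block_mxEdl, block_mxEdr) !mxE /=.
rewrite !mulr1n !mulr0n !subr0.
move: (v (lshift _ ord0) 0) (v (lshift _ (lift ord0 ord0)) 0)
  (v (lshift _ (lift ord0 (lift ord0 ord0))) 0)
  (v (lshift _ (lift ord0 (lift ord0 (lift ord0 ord0)))) 0) => x0 x1 x2 x3.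
move: (v (rshift _ ord0) 0) (v (rshift _ (lift ord0 ord0)) 0)
  (v (rshift _ (lift ord0 (lift ord0 ord0))) 0)
  (v (rshift _ (lift ord0 (lift ord0 (lift ord0 ord0)))) 0) => y0 y1 y2 y3.
have := form_AC x0 y0; have := form_AC x2 (- y2).
have := form_BD x1 (- y3); have := form_BD x3 (- y1).
lra.
Qed.

Lemma ww_cov_schur (p := B * D - F ^+ 2) : is_cov (n := 4) gamma ->
  [/\ 0 < B, 0 < D, 0 < p, D / p <= A & B / p <= C].
Proof.
move=> cov.
have [A_ge0 B_ge0] : psd2 A (-1) B.
  have : psd2 (gamma (inA 0) (inA 0)) (-1) (gamma (inA 1) (inA 1)).
    exact: (is_cov_minor (n := 4) (i := inA 0) (j := inA 1) cov isT erefl).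
  by rewrite /ww_gamma !block_mxEul !mxE.
rewrite sqrrN expr1n => AB_ge1; have B_gt0 : 0 < B by nra.
have [C_ge0 D_ge0] : psd2 C (-1) D.
  have : psd2 (gamma (inB 2) (inB 2)) (-1) (gamma (inB 3) (inB 3)).
    exact: (is_cov_minor (n := 4) (i := inB 2) (j := inB 3) cov isT erefl).
  by rewrite /ww_gamma !block_mxEdr !mxE.
rewrite sqrrN expr1n => CD_ge1; have D_gt0 : 0 < D by nra.
(* is_cov_re_form works at dimension 4.*2; block_mxE* need it written as
   2.*2 + 2.*2, hence the conversion [-[4.*2]/(2.*2 + 2.*2)]. *)
have [p_gt0 A_ge] : 0 < p /\ D / p <= A.
  apply: form3_schur D_gt0 _ => t k l.
  have := is_cov_re_form (n := 4) (t *: delta_mx (inA 0) 0)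
                         (k *: delta_mx (inA 1) 0 + l *: delta_mx (inB 3) 0) cov.
  rewrite /re_form !(bformDl, bformDr, bform_delta) /ww_gamma -[4.*2]/(2.*2 + 2.*2).
  rewrite !(block_mxEul, block_mxEur, block_mxEdl, block_mxEdr) !mxE /=; lra.
have [_ C_ge] : 0 < D * B - F ^+ 2 /\ B / (D * B - F ^+ 2) <= C.
  apply: form3_schur B_gt0 _ => t k l.
  have := is_cov_re_form (n := 4) (t *: delta_mx (inB 2) 0)
                         (k *: delta_mx (inB 3) 0 + l *: delta_mx (inA 1) 0) cov.
  rewrite /re_form !(bformDl, bformDr, bform_delta) /ww_gamma -[4.*2]/(2.*2 + 2.*2).
  rewrite !(block_mxEul, block_mxEur, block_mxEdl, block_mxEdr) !mxE /=; lra.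
by rewrite [D * B]mulrC in C_ge.
Qed.

Lemma ww_separable_margin :
  gaussian_separable (m := 2) (n := 2) gamma -> 0 <= ww_margin A B C D E F.
Proof.
case=> gA [gB [cov_A [cov_B gap]]].
have [gap_x1 gap_x2 gap_p1 gap_p2] := ww_gap_minors gap.
have psd_A := psd2_mean (is_cov_minor (i := q 0) (j := q 1) cov_A isT erefl)
                        (is_cov_minor (i := q 2) (j := q 3) cov_A isT erefl).
have psd_B := psd2_mean (is_cov_minor (i := q 0) (j := q 1) cov_B isT erefl)
                        (is_cov_minor (i := q 2) (j := q 3) cov_B isT erefl).
apply: (ww_margin_ge0 psd_A psd_B); apply/psd2P => x y.
  move/psd2P: gap_x1 => /(_ x y); move/psd2P: gap_x2 => /(_ x (- y)); lra.
move/psd2P: gap_p1 => /(_ x (- y)); move/psd2P: gap_p2 => /(_ x (- y)); lra.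
Qed.

Lemma ww_margin_separable : is_cov (n := 4) gamma ->
  0 <= ww_margin A B C D E F -> gaussian_separable (m := 2) (n := 2) gamma.
Proof.
move=> cov margin_ge0.
have [B_gt0 D_gt0 p_gt0 A_ge C_ge] := ww_cov_schur cov.
have [a [c [a_gt0 c_gt0 psd_AC psd_BD]]] :=
  ww_margin_split B_gt0 D_gt0 p_gt0 A_ge C_ge margin_ge0.
have pure x : 0 < x -> is_cov (n := 2) (diag4 x x^-1).
  move=> x_gt0; apply: is_cov_diag4.
  by split; [exact: ltW | rewrite invr_ge0 ltW | rewrite sqrrN expr1n divff ?gt_eqF].
exists (diag4 a a^-1), (diag4 c c^-1).
by split; [exact: pure | split; [exact: pure | exact: ww_gap_rpsd]].
Qed.

End WernerWolf.

Theorem mainTheorem4 (R : realType) (A B C D E F : R) :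
  is_cov (n := 4) (ww_gamma A B C D E F) ->
  (gaussian_separable (m := 2) (n := 2) (ww_gamma A B C D E F) <->
   0 <= (A * C - E ^+ 2) * (B * D - F ^+ 2) - 2 * `|E * F| - C * D - A * B + 1).
Proof.
move=> cov; split; first exact: ww_separable_margin.
exact: ww_margin_separable.
Qed.
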